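(* Consider the controlled network SIS system $\dot x=(-D-H(x)+B-XB)x$, with $B$ irreducible, where $H(x)=\operatorname{diag}(h_1(x_1),\dots,h_n(x_n))$ and each $h_i:[0,1]\to\mathbb{R}_{\ge0}$ is bounded, smooth, monotonically nondecreasing, with $h_i(0)=0$. Suppose $s(-D+B)\le 0$. Then $0_n$ is the unique equilibrium of the system in $\Xi_n$, and $\lim_{t\to\infty}x(t)=0_n$ for all $x(0)\in\Xi_n$.
   Context: $n\ge2$, $D=\operatorname{diag}(d_1,\dots,d_n)$ with $d_i>0$, $B=(b_{ij})\in\mathbb{R}^{n\times n}$ entrywise nonnegative, $X=\operatorname{diag}(x_1,\dots,x_n)$; componentwise $\dot x_i=-(d_i+h_i(x_i))x_i+(1-x_i)\sum_j b_{ij}x_j$. $B$ irreducible is equivalent to the associated directed graph being strongly connected. $\Xi_n=[0,1]^n$; trajectories starting in $\Xi_n$ remain in $\Xi_n$. $s(M)$ denotes the largest real part of the eigenvalues of a square matrix $M$. *)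

From Stdlib Require Export Reals Lra Lia Relations.
Open Scope R_scope.

(* Vectors in R^n are functions nat -> R (only indices i < n matter);
   n x n matrices are functions nat -> nat -> R. *)

Fixpoint rsum (n : nat) (f : nat -> R) : R :=
  match n with O => 0 | S k => rsum k f + f k end.

Definition mxvec (n : nat) (M : nat -> nat -> R) (v : nat -> R) (i : nat) : R :=
  rsum n (fun j => M i j * v j).

(* a + i*c is a (complex) eigenvalue of the real matrix M:
   M (u + i w) = (a + i c)(u + i w) for some nonzero complex vector u + i w *)
Definition is_eigenvalue (n : nat) (M : nat -> nat -> R) (a c : R) : Prop :=
  exists u w : nat -> R,
    (exists k, (k < n)%nat /\ (u k <> 0 \/ w k <> 0)) /\
    forall i, (i < n)%nat ->
      mxvec n M u i = a * u i - c * w i /\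
      mxvec n M w i = c * u i + a * w i.

(* s(M) <= 0 : every eigenvalue has real part <= 0 (s(M) is the maximum of
   the real parts over the nonempty finite spectrum). *)
Definition spectral_abscissa_nonpos (n : nat) (M : nat -> nat -> R) : Prop :=
  forall a c, is_eigenvalue n M a c -> a <= 0.

Definition minusD_plusB (d : nat -> R) (b : nat -> nat -> R) : nat -> nat -> R :=
  fun i j => b i j - (if Nat.eqb i j then d i else 0).

(* B irreducible <=> associated directed graph (edge i -> j iff b_ij > 0) is
   strongly connected on the node set {0,..,n-1}. *)
Definition edge (n : nat) (b : nat -> nat -> R) (i j : nat) : Prop :=
  (i < n)%nat /\ (j < n)%nat /\ 0 < b i j.

Definition irreducible (n : nat) (b : nat -> nat -> R) : Prop :=
  forall i j, (i < n)%nat -> (j < n)%nat -> i <> j -> clos_trans nat (edge n b) i j.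

(* smoothness on [0,1]: derivatives of every order exist on [0,1]
   (one-sided at the endpoints). *)
Definition has_deriv_on01 (f : R -> R) (t l : R) : Prop :=
  forall eps, 0 < eps -> exists delta, 0 < delta /\
    forall s, 0 <= s <= 1 -> s <> t -> Rabs (s - t) < delta ->
      Rabs ((f s - f t) / (s - t) - l) < eps.

Definition smooth_on01 (f : R -> R) : Prop :=
  exists Df : nat -> R -> R,
    (forall t, 0 <= t <= 1 -> Df O t = f t) /\
    forall k t, 0 <= t <= 1 -> has_deriv_on01 (Df k) t (Df (S k) t).

Definition admissible_gain (h : R -> R) : Prop :=
  (forall s, 0 <= s <= 1 -> 0 <= h s) /\
  (exists Mb, forall s, 0 <= s <= 1 -> h s <= Mb) /\
  smooth_on01 h /\
  (forall s1 s2, 0 <= s1 -> s1 <= s2 -> s2 <= 1 -> h s1 <= h s2) /\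
  h 0 = 0.

Definition in_Xi (n : nat) (x : nat -> R) : Prop :=
  forall i, (i < n)%nat -> 0 <= x i <= 1.

Definition sis_field (n : nat) (d : nat -> R) (b : nat -> nat -> R)
  (h : nat -> R -> R) (x : nat -> R) (i : nat) : R :=
  - (d i + h i (x i)) * x i + (1 - x i) * rsum n (fun j => b i j * x j).

Definition is_equilibrium (n : nat) (d : nat -> R) (b : nat -> nat -> R)
  (h : nat -> R -> R) (x : nat -> R) : Prop :=
  forall i, (i < n)%nat -> sis_field n d b h x i = 0.

From Stdlib Require Import Reals Lra Lia Relations Classical IndefiniteDescription.
Open Scope R_scope.

(* Since [-D + B] is an irreducible Metzler matrix, Perron-Frobenius yields a
   positive left vector [v] with [v^T (-D + B) <= 0], the Perron root being an
   eigenvalue, hence [<= 0].  Along the flow [V = v . x] then satisfies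
   [V' <= - sum_i v_i x_i (B x)_i <= 0].  At an equilibrium this forces
   [x_i (B x)_i = 0] and hence [x = 0].  Along a trajectory the bounded, Lipschitz
   rate [sum_i v_i x_i (B x)_i] is integrable, so it tends to 0 (Barbalat), and
   then [x_i' <= - d_i x_i + (B x)_i] drives every [x_i] to 0.  The Perron vector
   itself is a limit of normalized positive subeigenvectors [A z <= lam z] with
   [lam] tending to its infimum; irreducibility makes the limit positive and an
   eigenvector. *)

Lemma rsum_ext n f g : (forall i, (i < n)%nat -> f i = g i) -> rsum n f = rsum n g.
Proof. induction n; intros H; simpl; auto. rewrite IHn, H; auto. Qed.

Lemma rsum_plus n f g : rsum n (fun i => f i + g i) = rsum n f + rsum n g.
Proof. induction n; simpl; [lra|]. rewrite IHn; lra. Qed.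

Lemma rsum_scal n c f : rsum n (fun i => c * f i) = c * rsum n f.
Proof. induction n; simpl; [lra|]. rewrite IHn; lra. Qed.

Lemma rsum_minus n f g : rsum n (fun i => f i - g i) = rsum n f - rsum n g.
Proof. induction n; simpl; [lra|]. rewrite IHn; lra. Qed.

Lemma rsum_zero n : rsum n (fun _ => 0) = 0.
Proof. induction n; simpl; [lra|]. rewrite IHn; lra. Qed.

Lemma rsum_le n f g : (forall i, (i < n)%nat -> f i <= g i) -> rsum n f <= rsum n g.
Proof.
  induction n; intros H; simpl; [lra|].
  assert (rsum n f <= rsum n g) by (apply IHn; auto).
  assert (f n <= g n) by auto. lra.
Qed.

Lemma rsum_nonneg n f : (forall i, (i < n)%nat -> 0 <= f i) -> 0 <= rsum n f.
Proof. intros H. rewrite <- (rsum_zero n). apply rsum_le. auto. Qed.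

Lemma rsum_ge_term n f k : (k < n)%nat ->
  (forall i, (i < n)%nat -> i <> k -> 0 <= f i) -> f k <= rsum n f.
Proof.
  induction n; intros Hk H; [lia|]. simpl.
  destruct (Nat.eq_dec k n) as [->|Hne].
  - assert (0 <= rsum n f) by (apply rsum_nonneg; intros; apply H; lia). lra.
  - assert (f k <= rsum n f) by (apply IHn; [lia | intros; apply H; lia]).
    assert (0 <= f n) by (apply H; lia). lra.
Qed.

Lemma rsum_nonneg_eq0 n f k : (forall i, (i < n)%nat -> 0 <= f i) ->
  rsum n f <= 0 -> (k < n)%nat -> f k = 0.
Proof.
  intros H Hs Hk. assert (f k <= rsum n f) by (apply rsum_ge_term; auto).
  assert (0 <= f k) by auto. lra.
Qed.

Lemma rsum_swap n m f :
  rsum n (fun i => rsum m (fun j => f i j)) = rsum m (fun j => rsum n (fun i => f i j)).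
Proof. induction n; simpl; [now rewrite rsum_zero|]. now rewrite IHn, <- rsum_plus. Qed.

Lemma rsum_delta n c i x : (i < n)%nat ->
  rsum n (fun j => (if Nat.eqb i j then c else 0) * x j) = c * x i.
Proof.
  induction n; intros Hi; [lia|]. simpl.
  destruct (Nat.eq_dec i n) as [->|Hne].
  - rewrite Nat.eqb_refl, (rsum_ext n _ (fun _ => 0)), rsum_zero; [lra|].
    intros j Hj. destruct (Nat.eqb_spec n j); [lia|lra].
  - rewrite IHn by lia. destruct (Nat.eqb_spec i n); [lia|lra].
Qed.

Lemma mxvec_plus n M u w i :
  mxvec n M (fun j => u j + w j) i = mxvec n M u i + mxvec n M w i.
Proof. unfold mxvec. rewrite <- rsum_plus. apply rsum_ext. intros; ring. Qed.

Lemma mxvec_scal n M c z i : mxvec n M (fun j => c * z j) i = c * mxvec n M z i.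
Proof. unfold mxvec. rewrite <- rsum_scal. apply rsum_ext. intros; ring. Qed.

Lemma mxvec_nonneg n M z i : (forall j, (j < n)%nat -> 0 <= M i j) ->
  (forall j, (j < n)%nat -> 0 <= z j) -> 0 <= mxvec n M z i.
Proof. intros HM Hz. apply rsum_nonneg. intros j Hj. apply Rmult_le_pos; auto. Qed.

Definition trmx (M : nat -> nat -> R) : nat -> nat -> R := fun i j => M j i.

Lemma rsum_mxvec_trmx n M u z :
  rsum n (fun i => u i * mxvec n M z i) = rsum n (fun j => mxvec n (trmx M) u j * z j).
Proof.
  unfold mxvec, trmx.
  rewrite (rsum_ext n _ (fun i => rsum n (fun j => u i * M i j * z j))).
  - rewrite rsum_swap. apply rsum_ext. intros j _.
    rewrite (rsum_ext n _ (fun i => z j * (M i j * u i))), rsum_scal by (intros; ring). ring.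
  - intros i _. rewrite <- rsum_scal. apply rsum_ext. intros; ring.
Qed.

Definition increasing_idx (f : nat -> nat) : Prop := forall k, (f k < f (S k))%nat.

Lemma increasing_idx_mono f : increasing_idx f ->
  forall k k', (k <= k')%nat -> (f k <= f k')%nat.
Proof. intros H k k' Hk. induction Hk; [lia|]. specialize (H m). lia. Qed.

Lemma increasing_idx_ge f : increasing_idx f -> forall k, (k <= f k)%nat.
Proof. intros H k. induction k; [lia|]. specialize (H k). lia. Qed.

Lemma increasing_idx_comp f g : increasing_idx f -> increasing_idx g ->
  increasing_idx (fun k => f (g k)).
Proof.
  intros Hf Hg k. specialize (Hg k).
  pose proof (increasing_idx_mono f Hf (S (g k)) (g (S k)) Hg). specialize (Hf (g k)). lia.
Qed.

Lemma Un_cv_subseq u l f : increasing_idx f -> Un_cv u l -> Un_cv (fun k => u (f k)) l.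
Proof.
  intros Hf Hu eps Heps. destruct (Hu eps Heps) as [N HN]. exists N. intros k Hk.
  apply HN. pose proof (increasing_idx_ge f Hf k). lia.
Qed.

Lemma Un_cv_const c : Un_cv (fun _ => c) c.
Proof. intros eps He. exists 0%nat. intros. unfold Rdist. rewrite Rminus_diag, Rabs_R0. lra. Qed.

Lemma Un_cv_inv_rate u l : (forall k, Rabs (u k - l) <= / INR (S k)) -> Un_cv u l.
Proof.
  intros H eps Heps. destruct (INR_unbounded (/ eps)) as [N HN].
  assert (0 < / eps) by (apply Rinv_0_lt_compat; lra).
  exists N. intros k Hk. unfold Rdist. eapply Rle_lt_trans; [apply H|].
  assert (HkN : / eps < INR (S k)) by (apply le_INR in Hk; rewrite S_INR; lra).
  rewrite <- (Rinv_inv eps). apply Rinv_lt_contravar; [nra | lra].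
Qed.

Lemma Un_cv_rsum m (u : nat -> nat -> R) l :
  (forall i, (i < m)%nat -> Un_cv (fun k => u k i) (l i)) ->
  Un_cv (fun k => rsum m (u k)) (rsum m l).
Proof.
  induction m; intros H; simpl; [apply Un_cv_const|].
  apply CV_plus; [apply IHm; auto | apply H; lia].
Qed.

Lemma Un_cv_mxvec n M (u : nat -> nat -> R) l i :
  (forall j, (j < n)%nat -> Un_cv (fun k => u k j) (l j)) ->
  Un_cv (fun k => mxvec n M (u k) i) (mxvec n M l i).
Proof.
  intros H. apply (Un_cv_rsum n (fun k j => M i j * u k j)).
  intros j Hj. apply CV_mult; [apply Un_cv_const | auto].
Qed.

(* From a cluster point [l] of [u] we pick, for the [k]-th index, a later term
   within [1/(k+1)] of [l]. *)
Lemma unit_seq_cv_subseq (u : nat -> R) : (forall k, 0 <= u k <= 1) ->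
  exists f, increasing_idx f /\ exists l, Un_cv (fun k => u (f k)) l.
Proof.
  intros Hu.
  destruct (Bolzano_Weierstrass u (fun c => 0 <= c <= 1) (compact_P3 0 1) Hu) as [l Hl].
  assert (Hclose : forall Nk : nat * nat, exists p,
            (fst Nk <= p)%nat /\ Rabs (u p - l) < / INR (S (snd Nk))).
  { intros [N k]. assert (Hpos : 0 < / INR (S k)) by (apply Rinv_0_lt_compat, lt_0_INR; lia).
    destruct (Hl (disc l (mkposreal _ Hpos)) N) as [p Hp]; [now exists (mkposreal _ Hpos)|].
    now exists p. }
  destruct (functional_choice _ Hclose) as [c Hc].
  set (f := nat_rect (fun _ => nat) (c (0, 0)%nat) (fun k p => c (S p, S k))).
  exists f. split.
  - intros k. exact (proj1 (Hc (S (f k), S k))).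
  - exists l. apply Un_cv_inv_rate. intros k. apply Rlt_le.
    destruct k; [exact (proj2 (Hc (0, 0)%nat)) | exact (proj2 (Hc (S (f k), S k)))].
Qed.

Lemma unit_vecseq_cv_subseq m (z : nat -> nat -> R) :
  (forall k i, (i < m)%nat -> 0 <= z k i <= 1) ->
  exists f, increasing_idx f /\
    exists l, forall i, (i < m)%nat -> Un_cv (fun k => z (f k) i) (l i).
Proof.
  induction m; intros Hz.
  - exists (fun k => k). split; [intros k; lia|]. exists (fun _ => 0). intros; lia.
  - destruct IHm as [f [Hf [l Hl]]]; [intros; apply Hz; lia|].
    destruct (unit_seq_cv_subseq (fun k => z (f k) m)) as [g [Hg [lm Hlm]]];
      [intros; apply Hz; lia|].
    exists (fun k => f (g k)). split; [now apply increasing_idx_comp|].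
    exists (fun i => if Nat.eqb i m then lm else l i). intros i Hi.
    destruct (Nat.eqb_spec i m) as [->|Hne]; [exact Hlm|].
    apply (Un_cv_subseq (fun k => z (f k) i)); [exact Hg | apply Hl; lia].
Qed.

Lemma uniform_gap m (a : nat -> R) : (forall j, (j < m)%nat -> 0 < a j) ->
  exists e, 0 < e /\ forall j, (j < m)%nat -> e <= a j.
Proof.
  induction m; intros Ha; [exists 1; split; [lra | intros; lia]|].
  destruct IHm as [e [He Hle]]; [auto|].
  exists (Rmin e (a m)). split; [apply Rmin_pos; auto|].
  intros j Hj. destruct (Nat.eq_dec j m) as [->|Hne]; [apply Rmin_r|].
  eapply Rle_trans; [apply Rmin_l | apply Hle; lia].
Qed.

Definition metzler n (A : nat -> nat -> R) : Prop :=
  forall i j, (i < n)%nat -> (j < n)%nat -> i <> j -> 0 <= A i j.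

(* Loops [p = q] are always links, so that the sign of the diagonal of a
   Metzler matrix does not matter for irreducibility. *)
Definition mx_link n (A : nat -> nat -> R) (p q : nat) : Prop :=
  (p < n)%nat /\ (q < n)%nat /\ (p = q \/ 0 < A p q).

Definition irreducible_mx n (A : nat -> nat -> R) : Prop :=
  forall i j, (i < n)%nat -> (j < n)%nat -> i <> j -> clos_trans nat (mx_link n A) i j.

Definition pos_vec n (z : nat -> R) : Prop := forall i, (i < n)%nat -> 0 < z i.

Definition sub_eigvec n (A : nat -> nat -> R) (lam : R) (z : nat -> R) : Prop :=
  pos_vec n z /\ forall i, (i < n)%nat -> mxvec n A z i <= lam * z i.

Section PerronFrobenius.

Variables (n : nat) (A : nat -> nat -> R).
Hypothesis n_gt0 : (0 < n)%nat.
Hypothesis A_metzler : metzler n A.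

Lemma sub_eigvec_lb lam z : sub_eigvec n A lam z -> A 0%nat 0%nat <= lam.
Proof.
  intros [Hz Hsub].
  assert (Hdiag : A 0%nat 0%nat * z 0%nat <= mxvec n A z 0%nat).
  { apply (rsum_ge_term n (fun j => A 0%nat j * z j)); auto.
    intros j Hj Hne. apply Rmult_le_pos; [apply A_metzler | apply Rlt_le, Hz]; auto. }
  specialize (Hsub 0%nat n_gt0). specialize (Hz 0%nat n_gt0).
  apply (Rmult_le_reg_r (z 0%nat)); lra.
Qed.

Lemma sub_eigvec_ones :
  sub_eigvec n A (rsum n (fun i => rsum n (fun j => Rabs (A i j)))) (fun _ => 1).
Proof.
  split; [intros i _; lra|]. intros i Hi. rewrite Rmult_1_r.
  apply Rle_trans with (rsum n (fun j => Rabs (A i j))).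
  - apply rsum_le. intros j _. rewrite Rmult_1_r. apply Rle_abs.
  - apply (rsum_ge_term n (fun p => rsum n (fun j => Rabs (A p j)))); auto.
    intros. apply rsum_nonneg. intros; apply Rabs_pos.
Qed.

Lemma sub_eigvec_normalize lam z : sub_eigvec n A lam z ->
  exists w, sub_eigvec n A lam w /\ rsum n w = 1 /\ forall i, (i < n)%nat -> 0 <= w i <= 1.
Proof.
  intros [Hz Hsub].
  assert (Hzi_le : forall i, (i < n)%nat -> z i <= rsum n z).
  { intros i Hi. apply rsum_ge_term; auto. intros; apply Rlt_le, Hz; auto. }
  assert (HS : 0 < rsum n z) by (specialize (Hzi_le 0%nat n_gt0); specialize (Hz 0%nat n_gt0); lra).
  assert (Hinv : 0 < / rsum n z) by (apply Rinv_0_lt_compat; auto).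
  exists (fun j => / rsum n z * z j). split; [split|split].
  - intros i Hi. apply Rmult_lt_0_compat; auto.
  - intros i Hi. rewrite mxvec_scal. specialize (Hsub i Hi). nra.
  - rewrite rsum_scal. field. lra.
  - intros i Hi. specialize (Hzi_le i Hi). specialize (Hz i Hi). split; [nra|].
    apply (Rmult_le_reg_l (rsum n z)); auto.
    rewrite <- Rmult_assoc, Rinv_r by lra. lra.
Qed.

Lemma sub_eigval_inf : exists rho,
  (forall lam z, sub_eigvec n A lam z -> rho <= lam) /\
  (forall eps, 0 < eps -> exists lam z, sub_eigvec n A lam z /\ lam < rho + eps).
Proof.
  set (E := fun mu => exists z, sub_eigvec n A (- mu) z).
  assert (HE_bound : bound E).
  { exists (- A 0%nat 0%nat). intros mu [z Hz]. apply sub_eigvec_lb in Hz. lra. }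
  assert (HE_ne : exists mu, E mu).
  { eexists. exists (fun _ => 1). rewrite Ropp_involutive. apply sub_eigvec_ones. }
  destruct (completeness E HE_bound HE_ne) as [m [Hub Hlub]].
  exists (- m). split.
  - intros lam z Hz. assert (E (- lam)) by (exists z; now rewrite Ropp_involutive).
    apply Hub in H. lra.
  - intros eps He. apply NNPP. intros Hno.
    assert (is_upper_bound E (m - eps)).
    { intros mu [z Hz]. apply Rnot_lt_le. intros Hlt. apply Hno.
      exists (- mu), z. split; [auto | lra]. }
    apply Hlub in H. lra.
Qed.

Lemma sub_eigvec_limit rho :
  (forall lam z, sub_eigvec n A lam z -> rho <= lam) ->
  (forall eps, 0 < eps -> exists lam z, sub_eigvec n A lam z /\ lam < rho + eps) ->
  exists l, (forall i, (i < n)%nat -> 0 <= l i) /\ rsum n l = 1 /\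
    forall i, (i < n)%nat -> mxvec n A l i <= rho * l i.
Proof.
  intros Hinf Happ.
  assert (Hseq : forall k : nat, exists p : R * (nat -> R),
     sub_eigvec n A (fst p) (snd p) /\ rsum n (snd p) = 1 /\
     (forall i, (i < n)%nat -> 0 <= snd p i <= 1) /\ fst p < rho + / INR (S k)).
  { intros k. assert (Hk : 0 < / INR (S k)) by (apply Rinv_0_lt_compat, lt_0_INR; lia).
    destruct (Happ _ Hk) as [lam [z [Hz Hlam]]].
    destruct (sub_eigvec_normalize lam z Hz) as [w Hw]. now exists (lam, w). }
  destruct (functional_choice _ Hseq) as [c Hc].
  destruct (unit_vecseq_cv_subseq n (fun k => snd (c k))) as [f [Hf [l Hl]]];
    [intros k i Hi; apply Hc; auto|].
  assert (Hlam : Un_cv (fun k => fst (c (f k))) rho).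
  { apply (Un_cv_subseq (fun k => fst (c k))); auto. apply Un_cv_inv_rate. intros k.
    destruct (Hc k) as [Hsub [_ [_ Hlt]]]. specialize (Hinf _ _ Hsub).
    rewrite Rabs_right; lra. }
  exists l. split; [|split].
  - intros i Hi. apply (Rle_cv_lim (Un := fun _ => 0) (Vn := fun k => snd (c (f k)) i));
      [intros; apply Hc; auto | apply Un_cv_const | auto].
  - apply (UL_sequence (fun k => rsum n (snd (c (f k))))); [now apply Un_cv_rsum|].
    eapply Un_cv_ext; [|apply (Un_cv_const 1)]. intros k. symmetry. apply Hc.
  - intros i Hi. apply (Rle_cv_lim (Un := fun k => mxvec n A (snd (c (f k))) i)
                                   (Vn := fun k => fst (c (f k)) * snd (c (f k)) i)).
    + intros k. apply Hc; auto.
    + now apply Un_cv_mxvec.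
    + apply CV_mult; auto.
Qed.

Lemma sub_eigvec_zero_spreads z rho p q : (forall j, (j < n)%nat -> 0 <= z j) ->
  (forall j, (j < n)%nat -> mxvec n A z j <= rho * z j) ->
  clos_trans nat (mx_link n A) p q -> z p = 0 -> z q = 0.
Proof.
  intros Hz Hsub Hpath. induction Hpath as [p q [Hp [Hq [<-|Hpq]]]|]; auto.
  intros Hzp. specialize (Hsub p Hp). rewrite Hzp, Rmult_0_r in Hsub.
  destruct (Nat.eq_dec p q) as [<-|Hne]; auto.
  assert (H0 : A p q * z q = 0).
  { apply (rsum_nonneg_eq0 n (fun j => A p j * z j)); auto.
    intros j Hj. destruct (Nat.eq_dec j p) as [->|Hjp]; [rewrite Hzp; lra|].
    apply Rmult_le_pos; auto. }
  destruct (Rmult_integral _ _ H0); lra.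
Qed.

Definition strict_at rho k : Prop :=
  exists y, sub_eigvec n A rho y /\ mxvec n A y k < rho * y k.

Lemma mxvec_sub_unit y delta k j : (k < n)%nat ->
  mxvec n A (fun l => y l - delta * (if Nat.eqb k l then 1 else 0)) j =
  mxvec n A y j - delta * A j k.
Proof.
  intros Hk. unfold mxvec.
  rewrite <- (Rmult_1_l (A j k)), <- (rsum_delta n 1 k (A j) Hk), <- rsum_scal, <- rsum_minus.
  apply rsum_ext. intros; ring.
Qed.

(* Lowering [y k] a little keeps [y] subinvariant and makes every row [i]
   with [A i k > 0] strict. *)
Lemma strict_at_link rho i k : (i < n)%nat -> (k < n)%nat -> i <> k -> 0 < A i k ->
  strict_at rho k -> strict_at rho i.
Proof.
  intros Hi Hk Hne HA [y [[Hy Hsub] Hstrict]].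
  set (g := rho * y k - mxvec n A y k).
  assert (Hg : 0 < g) by (unfold g; lra).
  assert (Hyk : 0 < y k) by auto.
  set (delta := Rmin (y k / 2) (g / (1 + Rabs (rho - A k k)))).
  assert (Hd0 : 0 < delta).
  { apply Rmin_pos; [lra|]. apply Rdiv_lt_0_compat; [lra|].
    pose proof (Rabs_pos (rho - A k k)); lra. }
  assert (Hd1 : delta <= y k / 2) by apply Rmin_l.
  assert (Hd2 : delta * (rho - A k k) <= g).
  { assert (Hpos : 0 < 1 + Rabs (rho - A k k)) by (pose proof (Rabs_pos (rho - A k k)); lra).
    assert (Hdg : delta * (1 + Rabs (rho - A k k)) <= g).
    { assert (Hmin : delta <= g / (1 + Rabs (rho - A k k))) by apply Rmin_r.
      apply (Rmult_le_compat_r (1 + Rabs (rho - A k k))) in Hmin; [|lra].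
      unfold Rdiv in Hmin. rewrite Rmult_assoc, Rinv_l in Hmin by lra. lra. }
    pose proof (Rle_abs (rho - A k k)). nra. }
  exists (fun l => y l - delta * (if Nat.eqb k l then 1 else 0)). split; [split|].
  - intros j Hj. destruct (Nat.eqb_spec k j) as [<-|]; [lra|]. specialize (Hy j Hj). lra.
  - intros j Hj. rewrite mxvec_sub_unit by auto. destruct (Nat.eqb_spec k j) as [<-|Hjk].
    + unfold g in Hd2. lra.
    + assert (0 <= A j k) by (apply A_metzler; auto). specialize (Hsub j Hj). nra.
  - rewrite mxvec_sub_unit by auto. destruct (Nat.eqb_spec k i); [lia|].
    specialize (Hsub i Hi). nra.
Qed.

Lemma strict_at_path rho i k : clos_trans nat (mx_link n A) i k ->
  strict_at rho k -> strict_at rho i.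
Proof.
  intros Hpath. induction Hpath as [i k [Hi [Hk [->|Hik]]]|]; auto.
  destruct (Nat.eq_dec i k) as [->|Hne]; auto. now apply strict_at_link.
Qed.

Lemma strict_everywhere rho : (forall i, (i < n)%nat -> strict_at rho i) ->
  exists y, pos_vec n y /\ forall j, (j < n)%nat -> mxvec n A y j < rho * y j.
Proof.
  intros Hall.
  assert (Hacc : forall m, exists y, sub_eigvec n A rho y /\
            forall j, (j < m)%nat -> (j < n)%nat -> mxvec n A y j < rho * y j).
  { induction m as [|m [y [[Hy Hsub] Hstrict]]].
    - destruct (Hall 0%nat n_gt0) as [y [Hy _]]. exists y. split; [auto | intros; lia].
    - destruct (Nat.lt_ge_cases m n) as [Hm|Hm].
      + destruct (Hall m Hm) as [y' [[Hy' Hsub'] Hstrict']].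
        exists (fun j => y j + y' j). split; [split|].
        * intros j Hj. specialize (Hy j Hj). specialize (Hy' j Hj). lra.
        * intros j Hj. rewrite mxvec_plus. specialize (Hsub j Hj). specialize (Hsub' j Hj). lra.
        * intros j Hj Hjn. rewrite mxvec_plus. specialize (Hsub j Hjn). specialize (Hsub' j Hjn).
          destruct (Nat.eq_dec j m) as [->|]; [lra|].
          assert (mxvec n A y j < rho * y j) by (apply Hstrict; lia). lra.
      + exists y. split; [split; auto|]. intros j Hj Hjn. apply Hstrict; lia. }
  destruct (Hacc n) as [y [[Hy _] Hstrict]]. exists y. auto.
Qed.

Hypothesis A_irreducible : irreducible_mx n A.

Theorem perron_eigvec : exists rho z, pos_vec n z /\
  forall i, (i < n)%nat -> mxvec n A z i = rho * z i.
Proof.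
  destruct sub_eigval_inf as [rho [Hinf Happ]].
  destruct (sub_eigvec_limit rho Hinf Happ) as [l [Hl0 [Hl1 Hsub]]].
  assert (Hlpos : pos_vec n l).
  { intros i Hi. destruct (Hl0 i Hi) as [|Hz]; auto. exfalso.
    assert (Hzero : forall j, (j < n)%nat -> l j = 0).
    { intros j Hj. destruct (Nat.eq_dec i j) as [<-|Hne]; auto.
      eapply sub_eigvec_zero_spreads; eauto. }
    rewrite (rsum_ext n l (fun _ => 0)), rsum_zero in Hl1 by auto. lra. }
  exists rho, l. split; auto.
  (* A strict row would spread along paths to all rows, and then [rho] could be lowered. *)
  apply NNPP. intros Hno. apply not_all_ex_not in Hno as [k Hk].
  apply imply_to_and in Hk as [Hk Hneq].
  assert (Hstrict_k : strict_at rho k).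
  { exists l. split; [split; auto|].
    destruct (Rle_lt_or_eq_dec _ _ (Hsub k Hk)); [auto | contradiction]. }
  assert (Hall : forall i, (i < n)%nat -> strict_at rho i).
  { intros i Hi. destruct (Nat.eq_dec i k) as [->|Hne]; auto.
    apply (strict_at_path rho i k); auto. }
  destruct (strict_everywhere rho Hall) as [y [Hy Hstrict]].
  destruct (uniform_gap n (fun j => (rho * y j - mxvec n A y j) / y j)) as [e [He Hgap]].
  { intros j Hj. apply Rdiv_lt_0_compat; [specialize (Hstrict j Hj); lra | auto]. }
  assert (Hlow : sub_eigvec n A (rho - e) y).
  { split; auto. intros j Hj. specialize (Hgap j Hj). specialize (Hy j Hj).
    apply (Rmult_le_compat_r (y j)) in Hgap; [|lra].
    unfold Rdiv in Hgap. rewrite Rmult_assoc, Rinv_l in Hgap by lra. lra. }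
  specialize (Hinf _ _ Hlow). lra.
Qed.

End PerronFrobenius.

Lemma metzler_trmx n A : metzler n A -> metzler n (trmx A).
Proof. intros HA i j Hi Hj Hne. apply HA; auto. Qed.

Lemma mx_path_trmx n A p q :
  clos_trans nat (mx_link n A) p q -> clos_trans nat (mx_link n (trmx A)) q p.
Proof.
  induction 1 as [p q [Hp [Hq Hpq]]|p r q _ IH1 _ IH2].
  - apply t_step. repeat split; auto. destruct Hpq; [left | right]; auto.
  - now apply t_trans with r.
Qed.

Lemma irreducible_mx_trmx n A : irreducible_mx n A -> irreducible_mx n (trmx A).
Proof. intros HA i j Hi Hj Hne. apply mx_path_trmx, HA; auto. Qed.

Lemma pos_eigvecs_eigval_eq n A rho rho' z v : (0 < n)%nat ->
  pos_vec n z -> (forall i, (i < n)%nat -> mxvec n A z i = rho * z i) ->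
  pos_vec n v -> (forall i, (i < n)%nat -> mxvec n (trmx A) v i = rho' * v i) ->
  rho = rho'.
Proof.
  intros Hn Hz Hrho Hv Hrho'.
  assert (Hvz : 0 < rsum n (fun i => v i * z i)).
  { apply Rlt_le_trans with (v 0%nat * z 0%nat).
    - apply Rmult_lt_0_compat; auto.
    - apply (rsum_ge_term n (fun i => v i * z i)); auto.
      intros i Hi _. apply Rlt_le, Rmult_lt_0_compat; auto. }
  assert (Hsym := rsum_mxvec_trmx n A v z).
  rewrite (rsum_ext n _ (fun i => rho * (v i * z i))) in Hsym
    by (intros i Hi; rewrite Hrho; auto; ring).
  rewrite (rsum_ext n (fun j => _ * z j) (fun i => rho' * (v i * z i))) in Hsym
    by (intros i Hi; rewrite Hrho'; auto; ring).
  rewrite !rsum_scal in Hsym. apply (Rmult_eq_reg_r _ _ _ Hsym). lra.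
Qed.

(* [s(A) <= 0] bounds the Perron root of [A], which [pos_eigvecs_eigval_eq]
   identifies with the Perron root of [A^T]. *)
Lemma pos_left_subvec n A : (0 < n)%nat -> metzler n A -> irreducible_mx n A ->
  spectral_abscissa_nonpos n A ->
  exists v, pos_vec n v /\ forall j, (j < n)%nat -> mxvec n (trmx A) v j <= 0.
Proof.
  intros Hn HM HI Hs.
  destruct (perron_eigvec n A Hn HM HI) as [rho [z [Hz Hze]]].
  destruct (perron_eigvec n (trmx A) Hn (metzler_trmx n A HM) (irreducible_mx_trmx n A HI))
    as [rho' [v [Hv Hve]]].
  assert (Hrho : rho <= 0).
  { apply (Hs rho 0). exists z, (fun _ => 0). split.
    - exists 0%nat. split; auto. left. specialize (Hz 0%nat Hn). lra.
    - intros i Hi. rewrite Hze by auto. unfold mxvec. rewrite (rsum_ext n _ (fun _ => 0)).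
      + rewrite rsum_zero. split; ring.
      + intros; ring. }
  pose proof (pos_eigvecs_eigval_eq n A rho rho' z v Hn Hz Hze Hv Hve) as <-.
  exists v. split; auto. intros j Hj. rewrite Hve by auto. specialize (Hv j Hj). nra.
Qed.

Lemma trmx_weighted_nonpos n A v x :
  (forall j, (j < n)%nat -> mxvec n (trmx A) v j <= 0) -> (forall j, (j < n)%nat -> 0 <= x j) ->
  rsum n (fun i => v i * mxvec n A x i) <= 0.
Proof.
  intros HA Hx. rewrite rsum_mxvec_trmx, <- (rsum_zero n). apply rsum_le.
  intros j Hj. specialize (HA j Hj). specialize (Hx j Hj). nra.
Qed.

Lemma minusD_plusB_metzler n d b : (forall i j, (i < n)%nat -> (j < n)%nat -> 0 <= b i j) ->
  metzler n (minusD_plusB d b).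
Proof.
  intros Hb i j Hi Hj Hne. unfold minusD_plusB.
  destruct (Nat.eqb_spec i j); [lia|]. specialize (Hb i j Hi Hj). lra.
Qed.

Lemma clos_trans_incl (P Q : nat -> nat -> Prop) p q : (forall x y, P x y -> Q x y) ->
  clos_trans nat P p q -> clos_trans nat Q p q.
Proof. intros HPQ. induction 1; [apply t_step; auto | eapply t_trans; eauto]. Qed.

Lemma minusD_plusB_irreducible n d b : irreducible n b -> irreducible_mx n (minusD_plusB d b).
Proof.
  intros Hirr i j Hi Hj Hne. apply (clos_trans_incl (edge n b)); [|auto].
  intros p q [Hp [Hq Hpq]]. repeat split; auto.
  destruct (Nat.eq_dec p q); [now left | right].
  unfold minusD_plusB. destruct (Nat.eqb_spec p q); [lia | lra].
Qed.

Lemma mxvec_minusD_plusB n d b x i : (i < n)%nat ->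
  mxvec n (minusD_plusB d b) x i = mxvec n b x i - d i * x i.
Proof.
  intros Hi. unfold mxvec, minusD_plusB.
  rewrite <- (rsum_delta n (d i) i x Hi), <- rsum_minus. apply rsum_ext. intros; ring.
Qed.

Lemma sis_field_decomp n d b h x i : (i < n)%nat -> sis_field n d b h x i =
  mxvec n (minusD_plusB d b) x i - h i (x i) * x i - x i * mxvec n b x i.
Proof. intros Hi. rewrite mxvec_minusD_plusB by auto. unfold sis_field, mxvec. ring. Qed.

Section SISLyapunov.

Variables (n : nat) (d : nat -> R) (b : nat -> nat -> R) (h : nat -> R -> R) (v : nat -> R).
Hypothesis b_nonneg : forall i j, (i < n)%nat -> (j < n)%nat -> 0 <= b i j.
Hypothesis h_nonneg : forall i s, (i < n)%nat -> 0 <= s <= 1 -> 0 <= h i s.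
Hypothesis v_pos : pos_vec n v.
Hypothesis v_left_subvec :
  forall j, (j < n)%nat -> mxvec n (trmx (minusD_plusB d b)) v j <= 0.

Definition infection_pressure (x : nat -> R) : R :=
  rsum n (fun i => v i * (x i * mxvec n b x i)).

Lemma infection_pressure_term_nonneg x i : in_Xi n x -> (i < n)%nat ->
  0 <= v i * (x i * mxvec n b x i).
Proof.
  intros Hx Hi. apply Rmult_le_pos; [apply Rlt_le, v_pos; auto|].
  apply Rmult_le_pos; [apply Hx; auto|].
  apply mxvec_nonneg; [auto | intros j Hj; apply Hx; auto].
Qed.

Lemma infection_pressure_ge_term x i : in_Xi n x -> (i < n)%nat ->
  v i * (x i * mxvec n b x i) <= infection_pressure x.
Proof.
  intros Hx Hi. apply (rsum_ge_term n (fun j => v j * (x j * mxvec n b x j))); auto.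
  intros j Hj _. now apply infection_pressure_term_nonneg.
Qed.

Lemma sis_lyapunov_ineq x : in_Xi n x ->
  rsum n (fun i => v i * sis_field n d b h x i) <= - infection_pressure x.
Proof.
  intros Hx. unfold infection_pressure.
  rewrite (rsum_ext n _ (fun i => v i * mxvec n (minusD_plusB d b) x i -
                                  (v i * (h i (x i) * x i) + v i * (x i * mxvec n b x i)))).
  2: { intros i Hi. rewrite sis_field_decomp by auto. ring. }
  rewrite rsum_minus, rsum_plus.
  assert (Hlin : rsum n (fun i => v i * mxvec n (minusD_plusB d b) x i) <= 0).
  { apply trmx_weighted_nonpos; auto. intros j Hj. apply Hx; auto. }
  assert (Hgain : 0 <= rsum n (fun i => v i * (h i (x i) * x i))).
  { apply rsum_nonneg. intros i Hi. specialize (Hx i Hi).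
    specialize (h_nonneg i (x i) Hi Hx). specialize (v_pos i Hi).
    apply Rmult_le_pos; [lra|]. apply Rmult_le_pos; lra. }
  lra.
Qed.

Hypothesis d_pos : forall i, (i < n)%nat -> 0 < d i.

(* At an equilibrium the Lyapunov inequality forces [x_i (B x)_i = 0], and the
   equilibrium equation [(d_i + h_i) x_i = (1 - x_i) (B x)_i] then kills [x_i]. *)
Lemma sis_equilibrium_iff_zero x : in_Xi n x ->
  is_equilibrium n d b h x <-> (forall i, (i < n)%nat -> x i = 0).
Proof.
  intros Hx. split.
  - intros Heq i Hi.
    assert (Hly := sis_lyapunov_ineq x Hx).
    rewrite (rsum_ext n _ (fun _ => 0)), rsum_zero in Hly by (intros j Hj; rewrite Heq; auto; ring).
    assert (Hterm : v i * (x i * mxvec n b x i) = 0).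
    { apply (rsum_nonneg_eq0 n (fun j => v j * (x j * mxvec n b x j))); auto.
      - intros j Hj. now apply infection_pressure_term_nonneg.
      - unfold infection_pressure in Hly. lra. }
    specialize (v_pos i Hi). specialize (Heq i Hi). unfold sis_field in Heq.
    fold (mxvec n b x i) in Heq. specialize (h_nonneg i (x i) Hi (Hx i Hi)).
    specialize (d_pos i Hi).
    destruct (Rmult_integral _ _ Hterm) as [|Hxb]; [lra|].
    destruct (Rmult_integral _ _ Hxb) as [|Hb0]; auto.
    rewrite Hb0 in Heq. nra.
  - intros H0 i Hi. unfold sis_field. rewrite H0 by auto.
    rewrite (rsum_ext n _ (fun _ => 0)), rsum_zero; [ring|].
    intros j Hj. rewrite H0 by auto. ring.
Qed.

End SISLyapunov.

Lemma deriv_le_decrease f f' c a b : a <= b ->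
  (forall t, a <= t <= b -> derivable_pt_lim f t (f' t)) ->
  (forall t, a <= t <= b -> f' t <= - c) -> f b <= f a - c * (b - a).
Proof.
  intros Hab Hd Hc. destruct (Rle_lt_or_eq_dec _ _ Hab) as [Hlt| ->]; [|lra].
  destruct (MVT_cor2 f f' a b Hlt Hd) as [t [Ht Hint]].
  assert (f' t <= - c) by (apply Hc; lra). nra.
Qed.

Definition lipschitz_ge0 (L : R) (f : R -> R) : Prop :=
  forall s t, 0 <= s -> 0 <= t -> Rabs (f t - f s) <= L * Rabs (t - s).

Definition bounded_lipschitz (f : R -> R) : Prop :=
  (exists B, forall t, 0 <= t -> Rabs (f t) <= B) /\ (exists L, 0 <= L /\ lipschitz_ge0 L f).

Lemma deriv_bounded_lipschitz f f' K : (forall t, 0 <= t -> derivable_pt_lim f t (f' t)) ->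
  (forall t, 0 <= t -> Rabs (f' t) <= K) -> lipschitz_ge0 K f.
Proof.
  intros Hd HK s t Hs Ht.
  destruct (MVT_abs f f' s t) as [c [-> Hc]].
  - intros c Hc. apply Hd. pose proof (Rmin_glb_lt 0 s t). unfold Rmin in *.
    destruct (Rle_dec s t); lra.
  - apply Rmult_le_compat_r; [apply Rabs_pos|]. apply HK.
    unfold Rmin in Hc. destruct (Rle_dec s t); lra.
Qed.

Lemma bounded_lipschitz_const c : bounded_lipschitz (fun _ => c).
Proof.
  split; [now exists (Rabs c)|]. exists 0. split; [lra|].
  intros s t _ _. rewrite Rminus_diag, Rabs_R0. lra.
Qed.

Lemma bounded_lipschitz_plus f g : bounded_lipschitz f -> bounded_lipschitz g ->
  bounded_lipschitz (fun t => f t + g t).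
Proof.
  intros [[B1 Hf] [L1 [HL1 Hlf]]] [[B2 Hg] [L2 [HL2 Hlg]]]. split.
  - exists (B1 + B2). intros t Ht. eapply Rle_trans; [apply Rabs_triang|].
    specialize (Hf t Ht). specialize (Hg t Ht). lra.
  - exists (L1 + L2). split; [lra|]. intros s t Hs Ht.
    replace (f t + g t - (f s + g s)) with ((f t - f s) + (g t - g s)) by ring.
    eapply Rle_trans; [apply Rabs_triang|].
    specialize (Hlf s t Hs Ht). specialize (Hlg s t Hs Ht). lra.
Qed.

Lemma bounded_lipschitz_mult f g : bounded_lipschitz f -> bounded_lipschitz g ->
  bounded_lipschitz (fun t => f t * g t).
Proof.
  intros [[B1 Hf] [L1 [HL1 Hlf]]] [[B2 Hg] [L2 [HL2 Hlg]]].
  assert (HB1 : 0 <= B1) by (eapply Rle_trans; [apply Rabs_pos | apply (Hf 0); lra]).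
  assert (HB2 : 0 <= B2) by (eapply Rle_trans; [apply Rabs_pos | apply (Hg 0); lra]).
  split.
  - exists (B1 * B2). intros t Ht. rewrite Rabs_mult.
    apply Rmult_le_compat; auto using Rabs_pos.
  - exists (B1 * L2 + B2 * L1). split; [nra|]. intros s t Hs Ht.
    replace (f t * g t - f s * g s) with (f t * (g t - g s) + g s * (f t - f s)) by ring.
    eapply Rle_trans; [apply Rabs_triang|]. rewrite !Rabs_mult.
    assert (Rabs (f t) * Rabs (g t - g s) <= B1 * (L2 * Rabs (t - s)))
      by (apply Rmult_le_compat; auto using Rabs_pos).
    assert (Rabs (g s) * Rabs (f t - f s) <= B2 * (L1 * Rabs (t - s)))
      by (apply Rmult_le_compat; auto using Rabs_pos).
    lra.
Qed.

Lemma bounded_lipschitz_rsum m (u : R -> nat -> R) :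
  (forall i, (i < m)%nat -> bounded_lipschitz (fun t => u t i)) ->
  bounded_lipschitz (fun t => rsum m (u t)).
Proof.
  induction m; intros H; simpl; [apply bounded_lipschitz_const|].
  apply (bounded_lipschitz_plus (fun t => rsum m (u t)) (fun t => u t m));
    [apply IHm; auto | apply H; lia].
Qed.

Lemma lipschitz_stays_above L g t r eps : 0 <= L -> lipschitz_ge0 L g -> 0 <= t -> 0 < eps ->
  eps <= g t -> t <= r <= t + eps / (2 * (L + 1)) -> eps / 2 <= g r.
Proof.
  intros HL Hg Ht He Hgt Hr. specialize (Hg t r Ht ltac:(lra)).
  rewrite (Rabs_right (r - t)) in Hg by lra.
  assert (Hstep : L * (r - t) <= eps / 2).
  { apply Rle_trans with (L * (eps / (2 * (L + 1)))); [apply Rmult_le_compat_l; lra|].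
    apply (Rmult_le_reg_r (2 * (L + 1))); [lra|].
    replace (L * (eps / (2 * (L + 1))) * (2 * (L + 1))) with (L * eps) by (field; lra).
    nra. }
  pose proof (Rle_abs (g t - g r)). rewrite Rabs_minus_sym in Hg. lra.
Qed.

(* Barbalat-type argument: whenever the Lipschitz rate [g] reaches [eps] it stays
   above [eps / 2] on an interval of fixed length, which costs [V] a fixed amount. *)
Lemma lyapunov_rate_to_0 (V dV g : R -> R) :
  (forall t, 0 <= t -> derivable_pt_lim V t (dV t)) ->
  (forall t, 0 <= t -> dV t <= - g t) -> (forall t, 0 <= t -> 0 <= g t) ->
  (forall t, 0 <= t -> 0 <= V t) -> (exists L, 0 <= L /\ lipschitz_ge0 L g) ->
  forall eps, 0 < eps -> exists T, forall t, T <= t -> g t < eps.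
Proof.
  intros Hd HdV Hg HV [L [HL Hlip]] eps He. apply NNPP. intros Hno.
  assert (Hfreq : forall T, exists t, T <= t /\ eps <= g t).
  { intros T. apply NNPP. intros Hnot. apply Hno. exists T. intros t Ht.
    apply Rnot_le_lt. intros Hle. apply Hnot. now exists t. }
  set (tau := eps / (2 * (L + 1))).
  assert (Htau : 0 < tau) by (apply Rdiv_lt_0_compat; lra).
  assert (Hmono : forall t t', 0 <= t -> t <= t' -> V t' <= V t).
  { intros t t' Ht Htt. pose proof (deriv_le_decrease V dV 0 t t' Htt).
    enough (V t' <= V t - 0 * (t' - t)) by lra.
    apply H; intros r Hr; [apply Hd; lra|]. specialize (HdV r ltac:(lra)).
    specialize (Hg r ltac:(lra)). lra. }
  assert (Hdrop : forall t, 0 <= t -> eps <= g t -> V (t + tau) <= V t - eps / 2 * tau).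
  { intros t Ht Hgt. replace tau with ((t + tau) - t) at 2 by ring.
    apply (deriv_le_decrease V dV); [lra | intros; apply Hd; lra|].
    intros r Hr. specialize (HdV r ltac:(lra)).
    pose proof (lipschitz_stays_above L g t r eps HL Hlip Ht He Hgt Hr). lra. }
  assert (Hsteps : forall k : nat, exists t, 0 <= t /\ V t <= V 0 - INR k * (eps / 2 * tau)).
  { induction k as [|k [t [Ht HVt]]]; [exists 0; simpl; lra|].
    destruct (Hfreq t) as [t' [Ht' Hgt']].
    exists (t' + tau). split; [lra|]. rewrite S_INR.
    assert (V (t' + tau) <= V t' - eps / 2 * tau) by (apply Hdrop; lra).
    assert (V t' <= V t) by (apply Hmono; lra). lra. }
  assert (Hunit : 0 < eps / 2 * tau) by (apply Rmult_lt_0_compat; lra).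
  destruct (INR_unbounded (V 0 / (eps / 2 * tau))) as [k Hk].
  destruct (Hsteps k) as [t [Ht HVt]]. specialize (HV t Ht).
  apply (Rmult_lt_compat_r (eps / 2 * tau)) in Hk; [|lra].
  unfold Rdiv in Hk at 1. rewrite Rmult_assoc, Rinv_l in Hk by lra. lra.
Qed.

Lemma deriv_neg_not_left_max f m l s : derivable_pt_lim f m l -> l < 0 -> s < m ->
  (forall r, s <= r <= m -> f r <= f m) -> False.
Proof.
  intros Hd Hl Hsm Hmax.
  destruct (Hd (- l / 2) ltac:(lra)) as [delta Hdel].
  assert (Hdp := cond_pos delta).
  set (k := - Rmin (delta / 2) ((m - s) / 2)).
  assert (Hk1 := Rmin_l (delta / 2) ((m - s) / 2)).
  assert (Hk2 := Rmin_r (delta / 2) ((m - s) / 2)).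
  assert (Hk0 : 0 < Rmin (delta / 2) ((m - s) / 2)) by (apply Rmin_pos; lra).
  assert (Hkabs : Rabs k < delta) by (unfold k; rewrite Rabs_Ropp, Rabs_right; lra).
  specialize (Hdel k ltac:(unfold k; lra) Hkabs).
  set (q := (f (m + k) - f m) / k) in Hdel.
  assert (Hq : q < l / 2) by (apply Rabs_def2 in Hdel; lra).
  assert (Hfq : f (m + k) - f m = q * k) by (unfold q; field; unfold k; lra).
  assert (f (m + k) <= f m) by (apply Hmax; unfold k; lra).
  assert (k < 0) by (unfold k; lra). nra.
Qed.

Lemma stays_below_level f f' s eps : 0 <= s ->
  (forall t, 0 <= t -> derivable_pt_lim f t (f' t)) ->
  (forall t, s <= t -> eps <= f t -> f' t < 0) ->
  f s < eps -> forall t, s <= t -> f t < eps.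
Proof.
  intros Hs Hd Hneg Hfs t Ht. apply Rnot_le_lt. intros Hge.
  destruct (Rle_lt_or_eq_dec _ _ Ht) as [Hst|<-]; [|lra].
  destruct (continuity_ab_maj f s t ltac:(lra)) as [m [Hmax Hm]].
  { intros r Hr. apply (derivable_continuous_pt f r (exist _ (f' r) (Hd r ltac:(lra)))). }
  assert (Hfm : eps <= f m) by (pose proof (Hmax t ltac:(lra)); lra).
  assert (Hsm : s < m).
  { destruct (Rle_lt_or_eq_dec _ _ (proj1 Hm)) as [|<-]; [auto | lra]. }
  apply (deriv_neg_not_left_max f m (f' m) s); [apply Hd; lra | apply Hneg; lra | auto |].
  intros r Hr. apply Hmax. lra.
Qed.

Lemma descent_hits_level f f' T eps k : 0 <= T -> 0 < k ->
  (forall t, 0 <= t -> derivable_pt_lim f t (f' t)) ->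
  (forall t, T <= t -> eps <= f t -> f' t <= - k) ->
  exists s, T <= s /\ f s < eps.
Proof.
  intros HT Hk Hd Hneg. apply NNPP. intros Hno.
  assert (Habove : forall t, T <= t -> eps <= f t).
  { intros t Ht. apply Rnot_lt_le. intros Hlt. apply Hno. now exists t. }
  set (tau := (f T - eps + 1) / k).
  assert (Htau : k * tau = f T - eps + 1) by (unfold tau; field; lra).
  assert (HfT := Habove T (Rle_refl T)).
  assert (0 <= tau)
    by (unfold tau; apply Rmult_le_pos; [lra | apply Rlt_le, Rinv_0_lt_compat; lra]).
  assert (Hend : f (T + tau) <= f T - k * (T + tau - T)).
  { apply (deriv_le_decrease f f'); [lra | intros; apply Hd; lra |].
    intros t Ht. apply Hneg; [lra | apply Habove; lra]. }
  assert (eps <= f (T + tau)) by (apply Habove; lra).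
  replace (T + tau - T) with tau in Hend by ring. lra.
Qed.

(* Where [phi >= eps] the source term [beta] is eventually below [c eps / 2],
   so [phi] descends at a fixed rate until it drops below [eps] for good. *)
Lemma linear_comparison_to_0 (phi dphi beta : R -> R) c : 0 < c ->
  (forall t, 0 <= t -> derivable_pt_lim phi t (dphi t)) ->
  (forall t, 0 <= t -> 0 <= phi t) -> (forall t, 0 <= t -> 0 <= beta t) ->
  (forall t, 0 <= t -> dphi t <= - c * phi t + beta t) ->
  (forall eta, 0 < eta -> exists T, forall t, T <= t -> phi t * beta t < eta) ->
  forall eps, 0 < eps -> exists T, forall t, T <= t -> Rabs (phi t) < eps.
Proof.
  intros Hc Hd Hphi Hbeta Hdphi Hev eps He.
  destruct (Hev (c * eps * eps / 2)) as [T0 HT0]; [assert (0 < c * eps) by nra; nra|].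
  set (T := Rmax T0 0).
  assert (HT : T0 <= T /\ 0 <= T) by (split; [apply Rmax_l | apply Rmax_r]).
  assert (Hdesc : forall t, T <= t -> eps <= phi t -> dphi t <= - (c * eps / 2)).
  { intros t Ht Hp. specialize (HT0 t ltac:(lra)). specialize (Hdphi t ltac:(lra)).
    specialize (Hbeta t ltac:(lra)).
    assert (Hb : beta t * eps < c * eps / 2 * eps) by nra.
    apply Rmult_lt_reg_r in Hb; [nra | lra]. }
  destruct (descent_hits_level phi dphi T eps (c * eps / 2)) as [s [Hs Hps]];
    [lra | nra | auto | auto |].
  exists s. intros t Ht. rewrite Rabs_right by (apply Rle_ge, Hphi; lra).
  apply (stays_below_level phi dphi s eps); auto; [lra|].
  intros r Hr Hpr. pose proof (Hdesc r ltac:(lra) Hpr). nra.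
Qed.

Lemma derivable_pt_lim_rsum m (u du : R -> nat -> R) t :
  (forall j, (j < m)%nat -> derivable_pt_lim (fun s => u s j) t (du t j)) ->
  derivable_pt_lim (fun s => rsum m (u s)) t (rsum m (du t)).
Proof.
  induction m; intros H; simpl; [apply derivable_pt_lim_const|].
  apply (derivable_pt_lim_plus (fun s => rsum m (u s)) (fun s => u s m));
    [apply IHm; auto | apply H; lia].
Qed.

Lemma sis_field_bounded n d b h j : (j < n)%nat -> 0 < d j ->
  (forall k, (k < n)%nat -> 0 <= b j k) -> admissible_gain (h j) ->
  exists K, forall y, in_Xi n y -> Rabs (sis_field n d b h y j) <= K.
Proof.
  intros Hj Hd Hb [Hh0 [[Mb HMb] _]].
  exists (d j + Mb + rsum n (b j)). intros y Hy. unfold sis_field.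
  assert (Hyj := Hy j Hj). assert (H0 := Hh0 (y j) Hyj). assert (H1 := HMb (y j) Hyj).
  assert (HBy : 0 <= rsum n (fun k => b j k * y k) <= rsum n (b j)).
  { split; [apply rsum_nonneg | apply rsum_le]; intros k Hk;
      specialize (Hb k Hk); specialize (Hy k Hk); nra. }
  assert (0 <= rsum n (b j)) by lra.
  apply Rabs_le. split; nra.
Qed.

Section SISTrajectory.

Variables (n : nat) (d : nat -> R) (b : nat -> nat -> R) (h : nat -> R -> R) (v : nat -> R).
Variable x : R -> nat -> R.
Hypothesis d_pos : forall i, (i < n)%nat -> 0 < d i.
Hypothesis b_nonneg : forall i j, (i < n)%nat -> (j < n)%nat -> 0 <= b i j.
Hypothesis h_admissible : forall i, (i < n)%nat -> admissible_gain (h i).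
Hypothesis v_pos : pos_vec n v.
Hypothesis v_left_subvec :
  forall j, (j < n)%nat -> mxvec n (trmx (minusD_plusB d b)) v j <= 0.
Hypothesis x_in_Xi : forall t, 0 <= t -> in_Xi n (x t).
Hypothesis x_solution : forall i t, (i < n)%nat -> 0 <= t ->
  derivable_pt_lim (fun s => x s i) t (sis_field n d b h (x t) i).

Lemma h_nonneg i s : (i < n)%nat -> 0 <= s <= 1 -> 0 <= h i s.
Proof. intros Hi Hs. now apply h_admissible. Qed.

Lemma trajectory_bounded_lipschitz j : (j < n)%nat -> bounded_lipschitz (fun t => x t j).
Proof.
  intros Hj. split.
  - exists 1. intros t Ht. specialize (x_in_Xi t Ht j Hj). rewrite Rabs_right; lra.
  - destruct (sis_field_bounded n d b h j) as [K HK]; auto.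
    assert (HK0 : 0 <= K).
    { apply Rle_trans with (Rabs (sis_field n d b h (x 0) j));
        [apply Rabs_pos | apply HK, x_in_Xi; lra]. }
    exists K. split; auto.
    apply (deriv_bounded_lipschitz _ (fun t => sis_field n d b h (x t) j));
      [intros; apply x_solution; auto | intros; apply HK, x_in_Xi; auto].
Qed.

Lemma pressure_bounded_lipschitz :
  bounded_lipschitz (fun t => infection_pressure n b v (x t)).
Proof.
  apply (bounded_lipschitz_rsum n (fun t i => v i * (x t i * mxvec n b (x t) i))).
  intros i Hi. apply (bounded_lipschitz_mult (fun _ => v i)); [apply bounded_lipschitz_const|].
  apply (bounded_lipschitz_mult (fun t => x t i)); [now apply trajectory_bounded_lipschitz|].
  apply (bounded_lipschitz_rsum n (fun t j => b i j * x t j)). intros j Hj.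
  apply (bounded_lipschitz_mult (fun _ => b i j));
    [apply bounded_lipschitz_const | now apply trajectory_bounded_lipschitz].
Qed.

Lemma pressure_to_0 eps : 0 < eps ->
  exists T, forall t, T <= t -> infection_pressure n b v (x t) < eps.
Proof.
  apply (lyapunov_rate_to_0 (fun t => rsum n (fun j => v j * x t j))
                            (fun t => rsum n (fun j => v j * sis_field n d b h (x t) j))).
  - intros t Ht. apply (derivable_pt_lim_rsum n (fun s j => v j * x s j)
                                            (fun s j => v j * sis_field n d b h (x s) j)).
    intros j Hj. apply (derivable_pt_lim_scal (fun s => x s j)), x_solution; auto.
  - intros t Ht. apply sis_lyapunov_ineq; auto using h_nonneg.
  - intros t Ht. apply rsum_nonneg. intros i Hi.
    apply infection_pressure_term_nonneg; auto.
  - intros t Ht. apply rsum_nonneg. intros j Hj.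
    apply Rmult_le_pos; [apply Rlt_le, v_pos | apply x_in_Xi]; auto.
  - apply pressure_bounded_lipschitz.
Qed.

Lemma trajectory_to_0 i : (i < n)%nat ->
  forall eps, 0 < eps -> exists T, forall t, T <= t -> Rabs (x t i) < eps.
Proof.
  intros Hi.
  assert (HBx : forall t, 0 <= t -> 0 <= mxvec n b (x t) i).
  { intros t Ht. apply mxvec_nonneg; [auto | intros j Hj; apply x_in_Xi; auto]. }
  apply (linear_comparison_to_0 (fun t => x t i) (fun t => sis_field n d b h (x t) i)
                                (fun t => mxvec n b (x t) i) (d i)); auto.
  - intros t Ht. apply x_in_Xi; auto.
  - intros t Ht. unfold sis_field. fold (mxvec n b (x t) i).
    assert (Hxi := x_in_Xi t Ht i Hi). specialize (HBx t Ht).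
    pose proof (h_nonneg i (x t i) Hi Hxi). nra.
  - intros eta Heta. destruct (pressure_to_0 (v i * eta)) as [T HT].
    { apply Rmult_lt_0_compat; auto. }
    exists (Rmax T 0). intros t Ht.
    assert (HtT : T <= t /\ 0 <= t) by (pose proof (Rmax_l T 0); pose proof (Rmax_r T 0); lra).
    specialize (HT t (proj1 HtT)).
    assert (v i * (x t i * mxvec n b (x t) i) <= infection_pressure n b v (x t))
      by (apply infection_pressure_ge_term; auto; apply x_in_Xi, HtT).
    apply (Rmult_lt_reg_l (v i)); auto. lra.
Qed.

End SISTrajectory.

Theorem theorem3 (n : nat) (d : nat -> R) (b : nat -> nat -> R) (h : nat -> R -> R)
  (Hn : (2 <= n)%nat)
  (Hd : forall i, (i < n)%nat -> 0 < d i)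
  (Hb : forall i j, (i < n)%nat -> (j < n)%nat -> 0 <= b i j)
  (Hirr : irreducible n b)
  (Hh : forall i, (i < n)%nat -> admissible_gain (h i))
  (Hs : spectral_abscissa_nonpos n (minusD_plusB d b)) :
  (forall xs : nat -> R, in_Xi n xs ->
     (is_equilibrium n d b h xs <-> (forall i, (i < n)%nat -> xs i = 0))) /\
  (forall x : R -> nat -> R,
     in_Xi n (x 0) ->
     (forall t, 0 <= t -> in_Xi n (x t)) ->
     (forall i t, (i < n)%nat -> 0 <= t ->
        derivable_pt_lim (fun s => x s i) t (sis_field n d b h (x t) i)) ->
     forall i, (i < n)%nat ->
       forall eps, 0 < eps -> exists T, forall t, T <= t -> Rabs (x t i) < eps).
Proof.
  destruct (pos_left_subvec n (minusD_plusB d b)) as [v [Hv HvA]];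
    [lia | now apply minusD_plusB_metzler | now apply minusD_plusB_irreducible | exact Hs |].
  split.
  - intros xs Hxs. apply (sis_equilibrium_iff_zero n d b h v); auto.
    intros i s Hi Hs01. now apply Hh.
  - intros x _ Hx Hsol i Hi. now apply (trajectory_to_0 n d b h v x).
Qed.
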